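(* For every integer $t\ge2$, $$-\frac{71}{100t}<\frac{S_3(t)}{\binom{-3/2}{t}}+\frac{(-1)^t}{\binom{-3/2}{t}}\alpha\sinh\alpha+1-\cosh\alpha<\frac{12}{25t}.$$
   Context: $\alpha=\pi/6$. $(a)_m=a(a+1)\cdots(a+m-1)$ is the rising factorial ($(a)_0=1$); $\binom{x}{m}=x(x-1)\cdots(x-m+1)/m!$ for $m\ge1$, $\binom{x}{0}=1$. For $t\ge2$, $$S_3(t)=\sum_{s=1}^t\frac{(1/2-s)_{s+1}\binom{-3/2}{t-s}}{s}\sum_{u=1}^s\frac{(-1)^u(-s)_u}{(s+u)!\,(2u-1)!}\left(\frac{\pi^2}{36}\right)^u.$$ *)

From Stdlib Require Import Reals Arith.
Open Scope R_scope.

Fixpoint rising (a : R) (m : nat) : R :=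
  match m with
  | O => 1
  | S m' => rising a m' * (a + INR m')
  end.

Fixpoint falling (x : R) (m : nat) : R :=
  match m with
  | O => 1
  | S m' => falling x m' * (x - INR m')
  end.

Definition gbinom (x : R) (m : nat) : R := falling x m / INR (fact m).

Fixpoint sum1 (f : nat -> R) (n : nat) : R :=
  match n with
  | O => 0
  | S n' => sum1 f n' + f n
  end.

Definition alpha : R := PI / 6.

Definition S3 (t : nat) : R :=
  sum1 (fun s =>
    rising (1/2 - INR s) (s + 1) * gbinom (-3/2) (t - s) / INR s *
    sum1 (fun u =>
      (-1) ^ u * rising (- INR s) u
        / (INR (fact (s + u)) * INR (fact (2 * u - 1)))
        * (PI ^ 2 / 36) ^ u) s) t.

(* Up to sign, binom(-3/2, m) is b(m) = (2m+1) c(m) with c(m) = C(2m,m)/4^m.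
   Exchanging the two sums writes S_3(t)/binom(-3/2,t) as
   sum_u a_u L_u(t) / b(t), where a_u = alpha^(2u)/(2u-1)! and L_u(t) is the
   convolution of b with a kernel built from c(s) C(2s,s+u)/C(2s,s).  The
   defect Lambda_u(t) = 2u (L_u(t) + 1) - b(t) satisfies a three-term
   recurrence in u, giving |Lambda_u(t)| <= (7^u - 1)/3 c(t), which is
   O(b(t)/t).  What remains, sum_u a_u/(2u) and sum_u a_u, are Taylor partial
   sums of cosh alpha - 1 and alpha sinh alpha, whose remainders are of order
   alpha^(2t+2)/(2t+1)!.  Altogether t times the expression lies in
   [-23/54, 23/54]. *)

From Stdlib Require Import Reals Arith Lra Lia Psatz.
Open Scope R_scope.

(** * Finite sums *)

Fixpoint rsum (f : nat -> R) (n : nat) : R :=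
  match n with O => 0 | S k => rsum f k + f k end.

Lemma rsum_ext f g n : (forall i, (i < n)%nat -> f i = g i) -> rsum f n = rsum g n.
Proof.
  induction n as [|n IH]; intros H; simpl; auto.
  rewrite IH by (intros; apply H; lia). now rewrite H by lia.
Qed.

Lemma rsum_plus f g n : rsum (fun i => f i + g i) n = rsum f n + rsum g n.
Proof. induction n as [|n IH]; simpl; [lra|]. rewrite IH; lra. Qed.

Lemma rsum_minus f g n : rsum (fun i => f i - g i) n = rsum f n - rsum g n.
Proof. induction n as [|n IH]; simpl; [lra|]. rewrite IH; lra. Qed.

Lemma rsum_scal c f n : rsum (fun i => c * f i) n = c * rsum f n.
Proof. induction n as [|n IH]; simpl; [lra|]. rewrite IH; lra. Qed.

Lemma rsum_eq0 f n : (forall i, (i < n)%nat -> f i = 0) -> rsum f n = 0.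
Proof.
  induction n as [|n IH]; intros H; simpl; [lra|].
  rewrite IH by (intros; apply H; lia). rewrite H by lia. lra.
Qed.

Lemma rsum_recl f n : rsum f (S n) = f 0%nat + rsum (fun i => f (S i)) n.
Proof. induction n as [|n IH]; simpl in *; [lra|]. rewrite IH. lra. Qed.

Lemma rsum_rev f n : rsum f n = rsum (fun i => f (n - 1 - i)%nat) n.
Proof.
  induction n as [|n IH]; [reflexivity|].
  rewrite (rsum_recl (fun i => f (S n - 1 - i)%nat)). cbn [rsum]. rewrite IH.
  replace (S n - 1 - 0)%nat with n by lia.
  rewrite (rsum_ext (fun i => f (S n - 1 - S i)%nat) (fun i => f (n - 1 - i)%nat))
    by (intros; f_equal; lia).
  lra.
Qed.

Lemma rsum_swap (g : nat -> nat -> R) n m :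
  rsum (fun i => rsum (fun j => g i j) m) n = rsum (fun j => rsum (fun i => g i j) n) m.
Proof.
  induction n as [|n IH]; simpl.
  - symmetry; apply rsum_eq0; auto.
  - rewrite IH, <- rsum_plus. reflexivity.
Qed.

Lemma Rabs_rsum f n : Rabs (rsum f n) <= rsum (fun i => Rabs (f i)) n.
Proof.
  induction n as [|n IH]; simpl; [rewrite Rabs_R0; lra|].
  eapply Rle_trans; [apply Rabs_triang | lra].
Qed.

Lemma rsum_le f g n : (forall i, (i < n)%nat -> f i <= g i) -> rsum f n <= rsum g n.
Proof.
  induction n as [|n IH]; intros H; simpl; [lra|].
  assert (f n <= g n) by (apply H; lia).
  assert (rsum f n <= rsum g n) by (apply IH; intros; apply H; lia). lra.
Qed.

Lemma rsum_widen f n m :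
  (n <= m)%nat -> (forall i, (n <= i < m)%nat -> f i = 0) -> rsum f n = rsum f m.
Proof.
  intros Hnm H. induction m as [|m IH].
  - now replace n with 0%nat by lia.
  - destruct (Nat.eq_dec n (S m)) as [->|Hn]; [reflexivity|].
    simpl. rewrite <- IH by (lia || (intros; apply H; lia)). rewrite H by lia. lra.
Qed.

Lemma sum1_rsum f n : sum1 f n = rsum (fun i => f (S i)) n.
Proof. induction n as [|n IH]; simpl; auto. now rewrite IH. Qed.

Lemma Rabs_le_inv x a : Rabs x <= a -> - a <= x <= a.
Proof. unfold Rabs; destruct Rcase_abs; lra. Qed.

Lemma INR_fact_S n : INR (fact (S n)) = (INR n + 1) * INR (fact n).
Proof. now rewrite fact_simpl, mult_INR, S_INR. Qed.

(** * The binomial coefficients at -1/2 and -3/2 *)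

(* [abs_binom12 n = |binom(-1/2, n)| = C(2n,n)/4^n] and
   [abs_binom32 n = |binom(-3/2, n)|]. *)
Fixpoint abs_binom12 (n : nat) : R :=
  match n with
  | O => 1
  | S k => abs_binom12 k * (2 * INR k + 1) / (2 * INR k + 2)
  end.

Definition abs_binom32 (n : nat) : R := (2 * INR n + 1) * abs_binom12 n.

Lemma abs_binom12_S n :
  abs_binom12 (S n) = abs_binom12 n * (2 * INR n + 1) / (2 * INR n + 2).
Proof. reflexivity. Qed.

Lemma abs_binom12_pos n : 0 < abs_binom12 n.
Proof.
  induction n as [|n IH]; simpl; [lra|].
  pose proof (pos_INR n). apply Rdiv_lt_0_compat; nra.
Qed.

Lemma abs_binom12_decr n : abs_binom12 (S n) <= abs_binom12 n.
Proof.
  rewrite abs_binom12_S. pose proof (pos_INR n). pose proof (abs_binom12_pos n).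
  apply Rmult_le_reg_r with (2 * INR n + 2); [lra|]. field_simplify; nra.
Qed.

Lemma abs_binom32_S n : abs_binom32 (S n) = abs_binom32 n + abs_binom12 (S n).
Proof.
  unfold abs_binom32. rewrite abs_binom12_S, S_INR. pose proof (pos_INR n). field. lra.
Qed.

Lemma abs_binom32_ge1 n : 1 <= abs_binom32 n.
Proof.
  induction n as [|n IH]; [unfold abs_binom32; simpl; lra|].
  rewrite abs_binom32_S. pose proof (abs_binom12_pos (S n)). lra.
Qed.

Lemma falling_m32 m : falling (-3/2) m = (-1) ^ m * abs_binom32 m * INR (fact m).
Proof.
  induction m as [|m IH]; [unfold abs_binom32; simpl; lra|].
  cbn [falling]. rewrite IH. unfold abs_binom32.
  rewrite abs_binom12_S, INR_fact_S, S_INR. simpl pow.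
  pose proof (pos_INR m). field. lra.
Qed.

Lemma gbinom_m32 m : gbinom (-3/2) m = (-1) ^ m * abs_binom32 m.
Proof. unfold gbinom. rewrite falling_m32. field. apply INR_fact_neq_0. Qed.

(* Symmetry k <-> n - k of the convolution. *)
Lemma abs_binom12_conv_weighted n :
  2 * rsum (fun k => INR k * abs_binom12 k * abs_binom12 (n - k)) (S n)
  = INR n * rsum (fun k => abs_binom12 k * abs_binom12 (n - k)) (S n).
Proof.
  rewrite <- (rsum_scal (INR n)).
  rewrite (rsum_ext (fun i => INR n * (abs_binom12 i * abs_binom12 (n - i)))
    (fun k => INR k * abs_binom12 k * abs_binom12 (n - k)
            + INR (n - k) * abs_binom12 k * abs_binom12 (n - k)))
    by (intros i Hi; rewrite minus_INR by lia; ring).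
  rewrite rsum_plus, (rsum_rev (fun k => INR (n - k) * abs_binom12 k * abs_binom12 (n - k))).
  rewrite (rsum_ext (fun i => INR (n - (S n - 1 - i)) * abs_binom12 (S n - 1 - i)
                            * abs_binom12 (n - (S n - 1 - i)))
    (fun k => INR k * abs_binom12 k * abs_binom12 (n - k))); [lra|].
  intros i Hi. replace (n - (S n - 1 - i))%nat with i by lia.
  replace (S n - 1 - i)%nat with (n - i)%nat by lia. ring.
Qed.

(* The coefficient identity behind (1-x)^(-1/2) (1-x)^(-1/2) = (1-x)^(-1). *)
Lemma abs_binom12_conv n :
  rsum (fun k => abs_binom12 k * abs_binom12 (n - k)) (S n) = 1.
Proof.
  induction n as [|n IH]; [simpl; lra|].
  apply Rmult_eq_reg_l with (INR (S n)); [|rewrite S_INR; pose proof (pos_INR n); lra].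
  rewrite <- abs_binom12_conv_weighted, rsum_recl. simpl (INR 0 * _).
  rewrite (rsum_ext (fun i => INR (S i) * abs_binom12 (S i) * abs_binom12 (S n - S i))
    (fun j => INR j * abs_binom12 j * abs_binom12 (n - j)
            + / 2 * (abs_binom12 j * abs_binom12 (n - j)))).
  2:{ intros i Hi. replace (S n - S i)%nat with (n - i)%nat by lia.
      rewrite abs_binom12_S, S_INR. pose proof (pos_INR i). field. lra. }
  rewrite rsum_plus, rsum_scal, IH.
  pose proof (abs_binom12_conv_weighted n) as Hw. rewrite IH, S_INR in *. lra.
Qed.

(** * The kernel and its convolution with [abs_binom32] *)

(* [binom_ratio s u = C(2s, s+u) / C(2s, s)], which vanishes for [u > s]. *)
Fixpoint binom_ratio (s u : nat) : R :=
  match u with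
  | O => 1
  | S k => binom_ratio s k * (INR s - INR k) / (INR s + 1 + INR k)
  end.

Lemma binom_ratio_eq0 s u : (s < u)%nat -> binom_ratio s u = 0.
Proof.
  induction u as [|u IH]; intros H; [lia|]. simpl.
  destruct (Nat.eq_dec s u) as [->|Hne].
  - replace (INR u - INR u) with 0 by ring. lra.
  - rewrite IH by lia. lra.
Qed.

Lemma binom_ratio_SS j k :
  binom_ratio (S j) (S k)
  = binom_ratio j k * (INR j + 1) ^ 2 / ((INR j + INR k + 1) * (INR j + INR k + 2)).
Proof.
  pose proof (pos_INR j). pose proof (pos_INR k).
  induction k as [|k IH].
  - cbn [binom_ratio]. rewrite ?S_INR. change (INR 0) with 0. field. lra.
  - cbn [binom_ratio] in *. pose proof (pos_INR k).
    rewrite IH by lra. rewrite ?S_INR. field. repeat split; lra.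
Qed.

Definition kernel (s u : nat) : R :=
  match s with O => 0 | _ => / 2 * abs_binom12 s * binom_ratio s u / INR s end.

Definition delta00 (s k : nat) : R := match s, k with O, O => 1 | _, _ => 0 end.

Lemma kernel_rec j k :
  8 * (INR k + 1) * kernel (S j) (S k) - 4 * (INR k + 1) * kernel j (S k)
  = 2 * (INR k + 2) * kernel j (S (S k)) + 2 * INR k * kernel j k + delta00 j k.
Proof.
  destruct j as [|m].
  - unfold kernel, delta00. destruct k as [|k].
    + simpl. field.
    + rewrite binom_ratio_eq0 by lia. simpl. lra.
  - pose proof (pos_INR m). pose proof (pos_INR k).
    unfold kernel, delta00. cbv iota beta.
    rewrite binom_ratio_SS, abs_binom12_S. cbn [binom_ratio]. rewrite !S_INR.
    field. repeat split; lra.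
Qed.

Lemma kernel_1 s :
  kernel s 1 = abs_binom12 s - abs_binom12 (S s) - delta00 s 0 / 2.
Proof.
  destruct s as [|s]; unfold kernel, delta00; [simpl; lra|].
  cbv iota beta. cbn [binom_ratio]. rewrite !abs_binom12_S, !S_INR.
  change (INR 0) with 0. pose proof (pos_INR s). field. lra.
Qed.

Definition kernel_conv (u t : nat) : R :=
  rsum (fun s => kernel s u * abs_binom32 (t - s)) (S t).

Lemma kernel_conv_S u t :
  kernel_conv u (S t) = rsum (fun s => kernel (S s) u * abs_binom32 (t - s)) (S t).
Proof. unfold kernel_conv. rewrite rsum_recl. unfold kernel at 1. simpl minus. lra. Qed.

Lemma kernel_conv_rec k t :
  2 * (INR k + 2) * kernel_conv (S (S k)) t + 2 * INR k * kernel_conv k t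
    + delta00 0 k * abs_binom32 t
  = 8 * (INR k + 1) * kernel_conv (S k) (S t) - 4 * (INR k + 1) * kernel_conv (S k) t.
Proof.
  rewrite kernel_conv_S. unfold kernel_conv.
  assert (E : 8 * (INR k + 1) * rsum (fun s => kernel (S s) (S k) * abs_binom32 (t - s)) (S t)
              - 4 * (INR k + 1) * rsum (fun s => kernel s (S k) * abs_binom32 (t - s)) (S t)
    = rsum (fun s => 2 * (INR k + 2) * (kernel s (S (S k)) * abs_binom32 (t - s))
        + 2 * INR k * (kernel s k * abs_binom32 (t - s))
        + delta00 s k * abs_binom32 (t - s)) (S t)).
  { rewrite <- !rsum_scal, <- rsum_minus. apply rsum_ext. intros i Hi.
    transitivity ((8 * (INR k + 1) * kernel (S i) (S k) - 4 * (INR k + 1) * kernel i (S k))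
                  * abs_binom32 (t - i)); [ring|].
    rewrite kernel_rec. ring. }
  rewrite E.
  rewrite !rsum_plus, !rsum_scal, (rsum_recl (fun s => delta00 s k * abs_binom32 (t - s))).
  rewrite (rsum_eq0 (fun i => delta00 (S i) k * abs_binom32 (t - S i)))
    by (intros; unfold delta00; lra).
  replace (t - 0)%nat with t by lia. lra.
Qed.

Lemma kernel_1_conv n :
  rsum (fun s => kernel s 1 * abs_binom12 (n - s)) (S n) = abs_binom12 (S n) - abs_binom12 n / 2.
Proof.
  rewrite (rsum_ext _ (fun s => abs_binom12 s * abs_binom12 (n - s)
      - abs_binom12 (S s) * abs_binom12 (n - s) - delta00 s 0 / 2 * abs_binom12 (n - s)))
    by (intros; rewrite kernel_1; ring).
  rewrite !rsum_minus, abs_binom12_conv.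
  pose proof (abs_binom12_conv (S n)) as Hc. rewrite rsum_recl in Hc.
  rewrite (rsum_ext (fun i => abs_binom12 (S i) * abs_binom12 (S n - S i))
    (fun s => abs_binom12 (S s) * abs_binom12 (n - s))) in Hc
    by (intros; do 2 f_equal; lia).
  rewrite (rsum_recl (fun s => delta00 s 0 / 2 * abs_binom12 (n - s))).
  rewrite (rsum_eq0 (fun i => delta00 (S i) 0 / 2 * abs_binom12 (n - S i)))
    by (intros; unfold delta00; lra).
  replace (S n - 0)%nat with (S n) in Hc by lia. replace (n - 0)%nat with n by lia.
  change (abs_binom12 0) with 1 in Hc. unfold delta00. lra.
Qed.

Lemma kernel_conv_1_S t :
  kernel_conv 1 (S t) = kernel_conv 1 t + (abs_binom12 (S (S t)) - abs_binom12 (S t) / 2).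
Proof.
  rewrite <- kernel_1_conv. unfold kernel_conv. cbn [rsum].
  rewrite (rsum_ext (fun s => kernel s 1 * abs_binom32 (S t - s))
    (fun s => kernel s 1 * abs_binom32 (t - s) + kernel s 1 * abs_binom12 (S t - s)))
    by (intros i Hi; replace (S t - i)%nat with (S (t - i)) by lia; rewrite abs_binom32_S; ring).
  rewrite rsum_plus.
  replace (S t - S t)%nat with 0%nat by lia. replace (S t - t)%nat with 1%nat by lia.
  replace (t - t)%nat with 0%nat by lia.
  rewrite (abs_binom32_S 0).
  replace (abs_binom32 0) with 1 by (unfold abs_binom32; simpl; lra).
  change (abs_binom12 0) with 1. lra.
Qed.

(* [kernel_conv u t] is close to [abs_binom32 t / (2u) - 1]: the defect [lam u t]
   turns out to be of the size of [abs_binom12 t], one power of [t] smaller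
   than [abs_binom32 t]. *)
Definition lam (u t : nat) : R :=
  match u with O => 0 | S _ => 2 * INR u * (kernel_conv u t + 1) - abs_binom32 t end.

Lemma lam_rec k t :
  lam (S (S k)) t = 4 * lam (S k) (S t) - 2 * lam (S k) t - lam k t + 4 * abs_binom12 (S t).
Proof.
  pose proof (kernel_conv_rec k t) as H. pose proof (abs_binom32_S t).
  unfold lam. rewrite !S_INR.
  destruct k as [|k]; unfold delta00 in H.
  - change (INR 0) with 0 in *. lra.
  - rewrite S_INR in *. lra.
Qed.

Lemma lam_1 t : lam 1 t = 2 * abs_binom12 (S t).
Proof.
  induction t as [|t IH].
  - unfold lam, kernel_conv, abs_binom32. simpl. unfold kernel. simpl. field.
  - unfold lam in *. rewrite kernel_conv_1_S, abs_binom32_S.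
    change (INR 1) with 1 in *. lra.
Qed.

Lemma lam_bound u t : Rabs (lam u t) <= (7 ^ u - 1) / 3 * abs_binom12 t.
Proof.
  revert t.
  enough ((forall t, Rabs (lam u t) <= (7 ^ u - 1) / 3 * abs_binom12 t) /\
          (forall t, Rabs (lam (S u) t) <= (7 ^ S u - 1) / 3 * abs_binom12 t)) by tauto.
  induction u as [|u [IH0 IH1]]; split; intros t.
  - simpl. rewrite Rabs_R0. pose proof (abs_binom12_pos t). lra.
  - rewrite lam_1. pose proof (abs_binom12_pos (S t)). pose proof (abs_binom12_decr t).
    rewrite Rabs_right by lra. simpl pow. lra.
  - exact (IH1 t).
  - rewrite lam_rec.
    destruct (Rabs_le_inv _ _ (IH1 (S t))). destruct (Rabs_le_inv _ _ (IH1 t)).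
    destruct (Rabs_le_inv _ _ (IH0 t)).
    pose proof (abs_binom12_pos t). pose proof (abs_binom12_pos (S t)).
    pose proof (abs_binom12_decr t).
    assert (1 <= 7 ^ u) by (apply pow_R1_Rle; lra).
    assert (7 ^ S u * abs_binom12 (S t) <= 7 ^ S u * abs_binom12 t)
      by (apply Rmult_le_compat_l; [apply pow_le; lra | lra]).
    apply Rabs_le. simpl pow in *. nra.
Qed.

(** * Rewriting [S3] through the kernel *)

Lemma rising_Sl a m : rising a (S m) = a * rising (a + 1) m.
Proof.
  induction m as [|m IH]; [simpl; ring|].
  cbn [rising] in *. rewrite IH, S_INR. ring.
Qed.

Lemma rising_half_sub s :
  rising (1/2 - INR s) (s + 1) = / 2 * (-1) ^ s * INR (fact s) * abs_binom12 s.
Proof.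
  rewrite Nat.add_1_r. induction s as [|s IH]; [simpl; lra|].
  rewrite rising_Sl. replace (1 / 2 - INR (S s) + 1) with (1/2 - INR s) by (rewrite S_INR; ring).
  rewrite IH, INR_fact_S, abs_binom12_S, S_INR. simpl pow.
  pose proof (pos_INR s). field. lra.
Qed.

Lemma rising_opp_nat s u :
  (-1) ^ u * rising (- INR s) u * INR (fact s) = binom_ratio s u * INR (fact (s + u)).
Proof.
  induction u as [|u IH]; [simpl; rewrite Nat.add_0_r; ring|].
  cbn [rising binom_ratio]. replace (s + S u)%nat with (S (s + u)) by lia.
  rewrite INR_fact_S, plus_INR. simpl pow.
  transitivity (-1 * ((-1) ^ u * rising (- INR s) u * INR (fact s)) * (- INR s + INR u)); [ring|].
  rewrite IH. pose proof (pos_INR s). pose proof (pos_INR u). field. lra.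
Qed.

Definition acoef (u : nat) : R := (PI ^ 2 / 36) ^ u / INR (fact (2 * u - 1)).

Lemma S3_summand t s : (1 <= s <= t)%nat ->
  rising (1/2 - INR s) (s + 1) * gbinom (-3/2) (t - s) / INR s *
    sum1 (fun u => (-1) ^ u * rising (- INR s) u
        / (INR (fact (s + u)) * INR (fact (2 * u - 1))) * (PI ^ 2 / 36) ^ u) s
  = (-1) ^ t * (rsum (fun k => acoef (S k) * kernel s (S k)) t * abs_binom32 (t - s)).
Proof.
  intros [Hs Hst]. rewrite sum1_rsum.
  rewrite (rsum_ext _ (fun k => acoef (S k) * binom_ratio s (S k) / INR (fact s))).
  2:{ intros i Hi. unfold acoef.
      pose proof (INR_fact_neq_0 s). pose proof (INR_fact_neq_0 (s + S i)).
      pose proof (INR_fact_neq_0 (2 * S i - 1)).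
      replace ((-1) ^ S i * rising (- INR s) (S i))
        with (binom_ratio s (S i) * INR (fact (s + S i)) / INR (fact s))
        by (rewrite <- rising_opp_nat; field; auto).
      field. repeat split; auto. }
  rewrite (rsum_widen _ s t) by (lia || (intros i Hi; rewrite binom_ratio_eq0 by lia; lra)).
  rewrite rising_half_sub, gbinom_m32.
  assert (Hs0 : INR s <> 0) by (apply not_0_INR; lia).
  rewrite (rsum_ext (fun k => acoef (S k) * kernel s (S k))
    (fun k => (/ 2 * abs_binom12 s * INR (fact s) / INR s)
              * (acoef (S k) * binom_ratio s (S k) / INR (fact s)))).
  2:{ intros i Hi. unfold kernel. destruct s as [|s]; [lia|].
      pose proof (INR_fact_neq_0 (S s)). field. split; auto. }
  rewrite rsum_scal.
  replace ((-1) ^ t) with ((-1) ^ s * (-1) ^ (t - s)) by (rewrite <- pow_add; f_equal; lia).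
  field. auto.
Qed.

Lemma S3_div_gbinom t : (1 <= t)%nat ->
  S3 t / gbinom (-3/2) t
  = rsum (fun k => acoef (S k) * kernel_conv (S k) t) t / abs_binom32 t.
Proof.
  intros Ht. unfold S3. rewrite sum1_rsum.
  rewrite (rsum_ext _ (fun i => (-1) ^ t *
      (rsum (fun k => acoef (S k) * kernel (S i) (S k)) t * abs_binom32 (t - S i))))
    by (intros i Hi; apply S3_summand; lia).
  rewrite rsum_scal, gbinom_m32.
  assert ((-1) ^ t <> 0) by (apply pow_nonzero; lra).
  assert (abs_binom32 t <> 0) by (pose proof (abs_binom32_ge1 t); lra).
  rewrite (rsum_ext _ (fun i => rsum (fun k => acoef (S k) * kernel (S i) (S k)
                                               * abs_binom32 (t - S i)) t)).
  2:{ intros i Hi.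
      transitivity (abs_binom32 (t - S i) * rsum (fun k => acoef (S k) * kernel (S i) (S k)) t);
        [ring|].
      rewrite <- rsum_scal. apply rsum_ext; intros; ring. }
  rewrite rsum_swap.
  rewrite (rsum_ext _ (fun k => acoef (S k) * kernel_conv (S k) t)).
  2:{ intros j Hj. unfold kernel_conv. rewrite rsum_recl.
      replace (kernel 0 (S j)) with 0 by reflexivity.
      rewrite Rmult_0_l, Rplus_0_l, <- rsum_scal. apply rsum_ext. intros; ring. }
  field. split; auto.
Qed.

(** * Taylor polynomials of exp, cosh and sinh *)

(* The terms of the series defining [exp] in the standard library. *)
Definition exp_term (y : R) (i : nat) : R := / INR (fact i) * y ^ i.

Definition abs_exp_term (y : R) (k : nat) : R := Rabs y ^ k / INR (fact k).

Lemma abs_exp_term_S y k : abs_exp_term y (S k) = abs_exp_term y k * Rabs y / (INR k + 1).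
Proof.
  unfold abs_exp_term. rewrite INR_fact_S. simpl pow.
  pose proof (INR_fact_neq_0 k). pose proof (pos_INR k). field. lra.
Qed.

Lemma abs_exp_term_ge0 y k : 0 <= abs_exp_term y k.
Proof.
  unfold abs_exp_term, Rdiv. apply Rmult_le_pos; [apply pow_le, Rabs_pos|].
  left; apply Rinv_0_lt_compat, INR_fact_lt_0.
Qed.

Lemma Rabs_exp_term y k : Rabs (exp_term y k) = abs_exp_term y k.
Proof.
  unfold exp_term, abs_exp_term. rewrite Rabs_mult, Rabs_inv, RPow_abs, Rabs_right.
  - field. apply INR_fact_neq_0.
  - left; apply INR_fact_lt_0.
Qed.

(* For [|y| <= 1] each term is at most half the previous one, so the tail is
   dominated by twice its first term; the invariant carries that slack along. *)
Lemma exp_partial_diff_bound y N k : Rabs y <= 1 ->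
  Rabs (sum_f_R0 (exp_term y) (N + k) - sum_f_R0 (exp_term y) N)
    + 2 * abs_exp_term y (S (N + k))
  <= 2 * abs_exp_term y (S N).
Proof.
  intros Hy. induction k as [|k IH].
  - rewrite Nat.add_0_r, Rminus_diag, Rabs_R0. lra.
  - replace (N + S k)%nat with (S (N + k)) by lia. cbn [sum_f_R0].
    pose proof (Rabs_triang (sum_f_R0 (exp_term y) (N + k) - sum_f_R0 (exp_term y) N)
                            (exp_term y (S (N + k)))) as Htri.
    rewrite Rabs_exp_term in Htri.
    replace (sum_f_R0 (exp_term y) (N + k) + exp_term y (S (N + k)) - sum_f_R0 (exp_term y) N)
      with (sum_f_R0 (exp_term y) (N + k) - sum_f_R0 (exp_term y) N + exp_term y (S (N + k)))
      by ring.
    rewrite (abs_exp_term_S y (S (N + k))).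
    pose proof (abs_exp_term_ge0 y (S (N + k))). pose proof (pos_INR (N + k)).
    pose proof (Rabs_pos y). rewrite S_INR.
    assert (abs_exp_term y (S (N + k)) * Rabs y / (INR (N + k) + 1 + 1)
            <= abs_exp_term y (S (N + k)) / 2).
    { apply Rmult_le_reg_r with (2 * (INR (N + k) + 1 + 1)); [lra|].
      field_simplify; [nra|lra]. }
    lra.
Qed.

Lemma exp_partial_error y N : Rabs y <= 1 ->
  Rabs (exp y - sum_f_R0 (exp_term y) N) <= 2 * abs_exp_term y (S N).
Proof.
  intros Hy.
  assert (Hexp : infinite_sum (exp_term y) (exp y)).
  { unfold exp. destruct (exist_exp y) as [l Hl]. exact Hl. }
  destruct (Rle_or_lt (Rabs (exp y - sum_f_R0 (exp_term y) N)) (2 * abs_exp_term y (S N)))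
    as [H|H]; [exact H|exfalso].
  destruct (Hexp (Rabs (exp y - sum_f_R0 (exp_term y) N) - 2 * abs_exp_term y (S N)))
    as [M HM]; [lra|].
  specialize (HM (N + M)%nat ltac:(lia)). unfold R_dist in HM. rewrite Rabs_minus_sym in HM.
  pose proof (exp_partial_diff_bound y N M Hy).
  pose proof (abs_exp_term_ge0 y (S (N + M))).
  pose proof (Rabs_triang (exp y - sum_f_R0 (exp_term y) (N + M))
                          (sum_f_R0 (exp_term y) (N + M) - sum_f_R0 (exp_term y) N)).
  replace (exp y - sum_f_R0 (exp_term y) (N + M)
           + (sum_f_R0 (exp_term y) (N + M) - sum_f_R0 (exp_term y) N))
    with (exp y - sum_f_R0 (exp_term y) N) in * by ring.
  lra.
Qed.

Definition cosh_partial (y : R) (n : nat) : R :=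
  rsum (fun u => y ^ (2 * u) / INR (fact (2 * u))) n.

Definition sinh_partial (y : R) (n : nat) : R :=
  rsum (fun u => y ^ (2 * u + 1) / INR (fact (2 * u + 1))) n.

Lemma pow_opp_even y n : (- y) ^ (2 * n) = y ^ (2 * n).
Proof. rewrite !pow_mult. f_equal. ring. Qed.

Lemma pow_opp_odd y n : (- y) ^ (2 * n + 1) = - y ^ (2 * n + 1).
Proof. rewrite !pow_add, pow_opp_even. ring. Qed.

Lemma exp_partial_parity y t :
  sum_f_R0 (exp_term y) (2 * t + 1) + sum_f_R0 (exp_term (- y)) (2 * t + 1)
    = 2 * cosh_partial y (S t) /\
  sum_f_R0 (exp_term y) (2 * t + 1) - sum_f_R0 (exp_term (- y)) (2 * t + 1)
    = 2 * sinh_partial y (S t).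
Proof.
  unfold cosh_partial, sinh_partial.
  induction t as [|t [IHc IHs]]; [unfold exp_term; simpl; split; field|].
  replace (2 * S t + 1)%nat with (S (S (2 * t + 1))) by lia. cbn [sum_f_R0].
  change (rsum ?f (S (S t))) with (rsum f (S t) + f (S t)). cbv beta.
  replace (S (S (2 * t + 1))) with (2 * S t + 1)%nat by lia.
  replace (S (2 * t + 1)) with (2 * S t)%nat by lia.
  unfold exp_term at 2 3 5 6 8 9 11 12. rewrite !pow_opp_even, !pow_opp_odd.
  split; lra.
Qed.

Lemma cosh_partial_error y t : Rabs y <= 1 ->
  Rabs (cosh y - cosh_partial y (S t)) <= 2 * abs_exp_term y (2 * t + 2).
Proof.
  intros Hy. destruct (exp_partial_parity y t) as [Hc _].
  pose proof (exp_partial_error y (2 * t + 1) Hy) as Ep.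
  pose proof (exp_partial_error (- y) (2 * t + 1) ltac:(rewrite Rabs_Ropp; exact Hy)) as Em.
  unfold abs_exp_term in Em. rewrite Rabs_Ropp in Em. fold (abs_exp_term y (S (2 * t + 1))) in Em.
  replace (S (2 * t + 1)) with (2 * t + 2)%nat in * by lia.
  replace (cosh y - cosh_partial y (S t))
    with (((exp y - sum_f_R0 (exp_term y) (2 * t + 1))
           + (exp (- y) - sum_f_R0 (exp_term (- y)) (2 * t + 1))) / 2)
    by (unfold cosh; lra).
  unfold Rdiv. rewrite Rabs_mult, (Rabs_right (/ 2)) by lra.
  pose proof (Rabs_triang (exp y - sum_f_R0 (exp_term y) (2 * t + 1))
                          (exp (- y) - sum_f_R0 (exp_term (- y)) (2 * t + 1))).
  lra.
Qed.

Lemma sinh_partial_error y t : Rabs y <= 1 ->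
  Rabs (sinh y - sinh_partial y (S t)) <= 2 * abs_exp_term y (2 * t + 2).
Proof.
  intros Hy. destruct (exp_partial_parity y t) as [_ Hs].
  pose proof (exp_partial_error y (2 * t + 1) Hy) as Ep.
  pose proof (exp_partial_error (- y) (2 * t + 1) ltac:(rewrite Rabs_Ropp; exact Hy)) as Em.
  unfold abs_exp_term in Em. rewrite Rabs_Ropp in Em. fold (abs_exp_term y (S (2 * t + 1))) in Em.
  replace (S (2 * t + 1)) with (2 * t + 2)%nat in * by lia.
  replace (sinh y - sinh_partial y (S t))
    with (((exp y - sum_f_R0 (exp_term y) (2 * t + 1))
           + - (exp (- y) - sum_f_R0 (exp_term (- y)) (2 * t + 1))) / 2)
    by (unfold sinh; lra).
  unfold Rdiv. rewrite Rabs_mult, (Rabs_right (/ 2)) by lra.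
  pose proof (Rabs_triang (exp y - sum_f_R0 (exp_term y) (2 * t + 1))
                          (- (exp (- y) - sum_f_R0 (exp_term (- y)) (2 * t + 1)))).
  rewrite Rabs_Ropp in *. lra.
Qed.

Lemma alpha_bounds : 0 < alpha <= 2/3.
Proof. unfold alpha. pose proof PI_RGT_0. pose proof PI_4. lra. Qed.

Lemma acoef_S k : acoef (S k) = alpha ^ (2 * S k) / INR (fact (2 * k + 1)).
Proof.
  unfold acoef. replace (PI ^ 2 / 36) with (alpha ^ 2) by (unfold alpha; field).
  rewrite pow_mult. do 3 f_equal. lia.
Qed.

Lemma cosh_partial_alpha t :
  cosh_partial alpha (S t) = 1 + rsum (fun k => acoef (S k) / (2 * INR (S k))) t.
Proof.
  unfold cosh_partial. rewrite rsum_recl. simpl (alpha ^ (2 * 0)).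
  change (INR (fact (2 * 0))) with 1.
  f_equal; [field|]. apply rsum_ext. intros i Hi. rewrite acoef_S.
  replace (2 * S i)%nat with (S (2 * i + 1)) by lia.
  rewrite INR_fact_S, !S_INR, plus_INR, mult_INR. change (INR 2) with 2. change (INR 1) with 1.
  pose proof (INR_fact_neq_0 (2 * i + 1)). pose proof (pos_INR i). field. lra.
Qed.

Definition taylor_rem (t : nat) : R := alpha ^ (2 * t + 2) / INR (fact (2 * t + 1)).

Lemma sinh_partial_alpha t :
  alpha * sinh_partial alpha (S t) = rsum (fun k => acoef (S k)) t + taylor_rem t.
Proof.
  unfold sinh_partial, taylor_rem. cbn [rsum]. rewrite Rmult_plus_distr_l, <- rsum_scal.
  f_equal.
  - apply rsum_ext. intros i Hi. rewrite acoef_S.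
    replace (2 * S i)%nat with (S (2 * i + 1)) by lia.
    simpl pow. field. apply INR_fact_neq_0.
  - replace (2 * t + 2)%nat with (S (2 * t + 1)) by lia. simpl pow.
    field. apply INR_fact_neq_0.
Qed.

Definition main_sum (t : nat) : R :=
  rsum (fun k => acoef (S k) * lam (S k) t / (2 * INR (S k) * abs_binom32 t)) t.

Definition taylor_error (t : nat) : R :=
  (taylor_rem t + alpha * (sinh alpha - sinh_partial alpha (S t))) / abs_binom32 t
  - (cosh alpha - cosh_partial alpha (S t)).

Lemma expression_decomp t : (1 <= t)%nat ->
  S3 t / gbinom (-3/2) t + (-1) ^ t / gbinom (-3/2) t * alpha * sinh alpha + 1 - cosh alpha
  = main_sum t + taylor_error t.
Proof.
  intros Ht. rewrite S3_div_gbinom by exact Ht. rewrite gbinom_m32.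
  assert ((-1) ^ t <> 0) by (apply pow_nonzero; lra).
  assert (abs_binom32 t <> 0) by (pose proof (abs_binom32_ge1 t); lra).
  assert (Hlam : main_sum t
     = / abs_binom32 t * rsum (fun k => acoef (S k) * kernel_conv (S k) t) t
       + / abs_binom32 t * rsum (fun k => acoef (S k)) t
       - rsum (fun k => acoef (S k) / (2 * INR (S k))) t).
  { unfold main_sum. rewrite <- !rsum_scal, <- rsum_plus, <- rsum_minus.
    apply rsum_ext. intros i Hi. unfold lam. pose proof (pos_INR i). rewrite S_INR.
    field. split; [lra|auto]. }
  unfold taylor_error. rewrite Hlam, cosh_partial_alpha.
  replace (rsum (fun k => acoef (S k)) t)
    with (alpha * sinh_partial alpha (S t) - taylor_rem t) by (rewrite sinh_partial_alpha; ring).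
  field. split; auto.
Qed.

Lemma acoef_pos k : 0 < acoef k.
Proof.
  unfold acoef. apply Rdiv_lt_0_compat; [|apply INR_fact_lt_0].
  apply pow_lt. pose proof PI_RGT_0. nra.
Qed.

Lemma acoef_SS k :
  acoef (S (S k)) = acoef (S k) * alpha ^ 2 / ((2 * INR k + 2) * (2 * INR k + 3)).
Proof.
  rewrite !acoef_S. replace (2 * S (S k))%nat with (2 * S k + 2)%nat by lia.
  replace (2 * S k + 1)%nat with (S (S (2 * k + 1))) by lia.
  rewrite !INR_fact_S, pow_add, S_INR, plus_INR, mult_INR.
  change (INR 2) with 2. change (INR 1) with 1.
  pose proof (INR_fact_lt_0 (2 * k + 1)). pose proof (pos_INR k). field. repeat split; lra.
Qed.

Definition major (k : nat) : R := acoef (S k) * 7 ^ S k / INR (S k).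

Lemma major_ge0 k : 0 <= major k.
Proof.
  unfold major. pose proof (acoef_pos (S k)). pose proof (pow_lt 7 (S k) ltac:(lra)).
  apply Rlt_le, Rdiv_lt_0_compat; [nra|]. apply lt_0_INR. lia.
Qed.

Lemma major_ratio k : major (S k) <= major k / 3.
Proof.
  assert (E : major (S k) = major k * (alpha ^ 2 * 7 * (INR k + 1)
                / ((2 * INR k + 2) * (2 * INR k + 3) * (INR k + 2)))).
  { unfold major. rewrite acoef_SS, !S_INR. simpl pow. pose proof (pos_INR k).
    field. repeat split; lra. }
  rewrite E. pose proof (major_ge0 k). pose proof alpha_bounds. pose proof (pos_INR k).
  assert (alpha ^ 2 * 7 * (INR k + 1) / ((2 * INR k + 2) * (2 * INR k + 3) * (INR k + 2)) <= 1/3).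
  { apply Rmult_le_reg_r with ((2 * INR k + 2) * (2 * INR k + 3) * (INR k + 2)); [nra|].
    field_simplify; [|repeat split; lra].
    assert (alpha ^ 2 <= 4/9) by (simpl; nra). nra. }
  nra.
Qed.

Lemma rsum_major n : rsum major n <= 3/2 * major 0.
Proof.
  enough (rsum major n + 3/2 * major n <= 3/2 * major 0) by (pose proof (major_ge0 n); lra).
  induction n as [|n IH]; simpl rsum; [lra|].
  pose proof (major_ratio n). lra.
Qed.

Lemma main_sum_term_bound t k :
  Rabs (acoef (S k) * lam (S k) t / (2 * INR (S k) * abs_binom32 t))
  <= major k / (6 * (2 * INR t + 1)).
Proof.
  pose proof (lam_bound (S k) t) as Hlam. pose proof (acoef_pos (S k)).
  pose proof (pos_INR k). pose proof (pos_INR t). pose proof (abs_binom12_pos t).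
  pose proof (pow_lt 7 (S k) ltac:(lra)).
  unfold major, abs_binom32. rewrite !S_INR in *. unfold Rdiv at 1.
  rewrite Rabs_mult, Rabs_mult, Rabs_inv, (Rabs_right (acoef (S k))) by lra.
  assert (Hden : 0 < 2 * (INR k + 1) * ((2 * INR t + 1) * abs_binom12 t))
    by (apply Rmult_lt_0_compat; [lra|apply Rmult_lt_0_compat; lra]).
  rewrite (Rabs_right (2 * (INR k + 1) * _)) by lra.
  apply Rle_trans with (acoef (S k) * ((7 ^ S k - 1) / 3 * abs_binom12 t)
                        * / (2 * (INR k + 1) * ((2 * INR t + 1) * abs_binom12 t))).
  { apply Rmult_le_compat_r; [left; apply Rinv_0_lt_compat, Hden|].
    apply Rmult_le_compat_l; lra. }
  apply Rmult_le_reg_r with (6 * (INR k + 1) * (2 * INR t + 1) * abs_binom12 t); [nra|].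
  field_simplify; try lra. nra.
Qed.

Lemma main_sum_bound t : INR t * Rabs (main_sum t) <= 7/18.
Proof.
  pose proof (pos_INR t). pose proof alpha_bounds.
  assert (Hmaj0 : major 0 = 7 * alpha ^ 2) by (unfold major; rewrite acoef_S; simpl; field).
  assert (Hsum : Rabs (main_sum t) <= rsum major t / (6 * (2 * INR t + 1))).
  { eapply Rle_trans; [apply Rabs_rsum|].
    replace (rsum major t / (6 * (2 * INR t + 1)))
      with (rsum (fun k => major k / (6 * (2 * INR t + 1))) t).
    - apply rsum_le. intros k _. apply main_sum_term_bound.
    - unfold Rdiv. rewrite (Rmult_comm (rsum major t)), <- rsum_scal.
      apply rsum_ext. intros; ring. }
  pose proof (rsum_major t). pose proof (Rabs_pos (main_sum t)).
  apply Rle_trans with (INR t * (rsum major t / (6 * (2 * INR t + 1)))).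
  - apply Rmult_le_compat_l; lra.
  - apply Rmult_le_reg_r with (6 * (2 * INR t + 1)); [lra|].
    assert (rsum major t <= 14/3) by (rewrite Hmaj0 in *; simpl pow in *; nra).
    field_simplify; [nra|lra].
Qed.

Lemma fact_odd_ge t : (2 <= t)%nat -> (60 * t <= fact (2 * t + 1))%nat.
Proof.
  intros H. induction t as [|t IH]; [lia|].
  destruct (Nat.eq_dec t 1) as [->|Hn]; [simpl; lia|].
  replace (2 * S t + 1)%nat with (S (S (2 * t + 1))) by lia.
  rewrite !fact_simpl. specialize (IH ltac:(lia)). nia.
Qed.

Lemma taylor_rem_bound t : (2 <= t)%nat -> INR t * taylor_rem t <= 1/135.
Proof.
  intros Ht. pose proof alpha_bounds.
  assert (Hfact : 60 * INR t <= INR (fact (2 * t + 1))).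
  { replace 60 with (INR 60) by (simpl; lra). rewrite <- mult_INR.
    apply le_INR, fact_odd_ge, Ht. }
  assert (Hpow : alpha ^ (2 * t + 2) <= 4/9).
  { rewrite Nat.add_comm, pow_add.
    pose proof (pow_incr alpha 1 (2 * t) ltac:(lra)). rewrite pow1 in *.
    pose proof (pow_le alpha (2 * t) ltac:(lra)).
    assert (0 <= alpha ^ 2 <= 4/9) by (simpl; nra). nra. }
  pose proof (pow_le alpha (2 * t + 2) ltac:(lra)). pose proof (pos_INR t).
  unfold taylor_rem. apply Rmult_le_reg_r with (INR (fact (2 * t + 1)));
    [apply INR_fact_lt_0|].
  field_simplify; [nra|apply INR_fact_neq_0].
Qed.

Lemma taylor_error_bound t : Rabs (taylor_error t) <= 5 * taylor_rem t.
Proof.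
  pose proof alpha_bounds.
  assert (Hrem0 : 0 <= taylor_rem t).
  { apply Rmult_le_pos; [apply pow_le; lra|]. left; apply Rinv_0_lt_compat, INR_fact_lt_0. }
  assert (Hterm : 2 * abs_exp_term alpha (2 * t + 2) <= 2 * taylor_rem t).
  { unfold abs_exp_term, taylor_rem. rewrite Rabs_right by lra.
    replace (2 * t + 2)%nat with (S (2 * t + 1)) at 2 by lia. rewrite INR_fact_S.
    pose proof (INR_fact_lt_0 (2 * t + 1)). pose proof (pos_INR (2 * t + 1)).
    pose proof (pow_le alpha (2 * t + 2) ltac:(lra)).
    apply Rmult_le_compat_l; [lra|]. unfold Rdiv. apply Rmult_le_compat_l; [lra|].
    apply Rinv_le_contravar; nra. }
  assert (Hal : Rabs alpha <= 1) by (rewrite Rabs_right; lra).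
  pose proof (sinh_partial_error alpha t Hal) as Hs.
  pose proof (cosh_partial_error alpha t Hal) as Hc.
  set (es := sinh alpha - sinh_partial alpha (S t)) in *.
  set (ec := cosh alpha - cosh_partial alpha (S t)) in *.
  pose proof (abs_binom32_ge1 t).
  assert (Hdiv : Rabs ((taylor_rem t + alpha * es) / abs_binom32 t)
                 <= taylor_rem t + alpha * Rabs es).
  { unfold Rdiv. rewrite Rabs_mult, Rabs_inv, (Rabs_right (abs_binom32 t)) by lra.
    pose proof (Rabs_triang (taylor_rem t) (alpha * es)).
    rewrite Rabs_mult, (Rabs_right alpha), (Rabs_right (taylor_rem t)) in * by lra.
    apply Rle_trans with (Rabs (taylor_rem t + alpha * es) * 1); [|lra].
    apply Rmult_le_compat_l; [apply Rabs_pos|].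
    rewrite <- Rinv_1. apply Rinv_le_contravar; lra. }
  unfold taylor_error. fold es ec.
  eapply Rle_trans; [apply Rabs_triang|]. rewrite Rabs_Ropp.
  pose proof (Rabs_pos es). nra.
Qed.

Theorem mainTheorem12 (t : nat) (ht : (2 <= t)%nat) :
  - 71 / (100 * INR t) <
    S3 t / gbinom (-3/2) t + (-1) ^ t / gbinom (-3/2) t * alpha * sinh alpha
      + 1 - cosh alpha
  < 12 / (25 * INR t).
Proof.
  rewrite expression_decomp by lia.
  assert (Ht : 2 <= INR t) by (replace 2 with (INR 2) by reflexivity; apply le_INR, ht).
  pose proof (main_sum_bound t) as Hmain.
  pose proof (taylor_error_bound t) as Herr. pose proof (taylor_rem_bound t ht).
  assert (Htot : INR t * Rabs (main_sum t + taylor_error t) <= 23/54).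
  { pose proof (Rabs_triang (main_sum t) (taylor_error t)). nra. }
  rewrite <- (Rabs_right (INR t)), <- Rabs_mult in Htot by lra.
  destruct (Rabs_le_inv _ _ Htot).
  split; apply Rmult_lt_reg_r with (INR t); try lra.
  - replace (- 71 / (100 * INR t) * INR t) with (- 71 / 100) by (field; lra). lra.
  - replace (12 / (25 * INR t) * INR t) with (12 / 25) by (field; lra). lra.
Qed.
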